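(* Let $k$ be an odd integer with $k\ge5$, and let $n>k$ be a positive integer with $n\equiv (k+1)/2\pmod k$. Then $\mathrm{msum}(n,k)>1$.
   Context: Let $n,k$ be positive integers with $n>k$ and let $S_n$ be the set of permutations $\pi=(\pi_1,\dots,\pi_n)$ of $1,\dots,n$. Indices are taken cyclically: $\pi_{n+i}=\pi_i$. The $k$-consecutive sums of $\pi$ are $s_i=\sum_{j=0}^{k-1}\pi_{i+j}$ for $i=1,\dots,n$. Define $\mathrm{msum}(\pi,k)=\max\{s_i: 1\le i\le n\}-\frac{k(n+1)}{2}$ and $\mathrm{msum}(n,k)=\min\{\mathrm{msum}(\pi,k):\pi\in S_n\}$. *)

From mathcomp Require Import all_boot all_order all_fingroup all_algebra.
Set Implicit Arguments. Unset Strict Implicit. Unset Printing Implicit Defensive.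
Import GRing.Theory Num.Theory.

(* A permutation pi of {1,...,n} is represented by s : {perm 'I_n};
   pi_{i+1} = s i + 1 for i : 'I_n (0-based positions, values shifted by 1).
   pival s m = pi at 0-based cyclic position m (taken mod n). *)

Definition pival (n : nat) (s : {perm 'I_n}) (m : nat) : nat :=
  nth 0 [seq (s i).+1 | i <- enum 'I_n] (m %% n).

Definition ksum (n k : nat) (s : {perm 'I_n}) (i : 'I_n) : nat :=
  \sum_(j < k) pival s (i + j).

Definition maxksum (n k : nat) (s : {perm 'I_n}) : nat :=
  \max_(i : 'I_n) ksum k s i.

Definition msum_perm (n k : nat) (s : {perm 'I_n}) : rat :=
  (maxksum k s)%:R - (k * (n + 1))%:R / 2%:R.

(* msum(n,k) = min over all permutations of msum(pi,k).
   The min of maxksum over the (nonempty) set of permutations; the index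
   value maxksum k 1 is itself attained, so it does not affect the min. *)
Definition msum (n k : nat) : rat :=
  (\big[minn/maxksum k (1 : {perm 'I_n})]_(s : {perm 'I_n}) maxksum k s)%:R
  - (k * (n + 1))%:R / 2%:R.

From mathcomp Require Import all_boot all_order all_fingroup all_algebra.
From mathcomp Require Import zify lra.
Import GRing.Theory Num.Theory.

Set Implicit Arguments.
Unset Strict Implicit.
Unset Printing Implicit Defensive.

(* Write n = q k + r with k = 2r - 1, and let M be the largest cyclic k-window
   sum of a permutation.  The whole cycle, of sum n(n+1)/2, splits into an
   r-window followed by q k-windows.  Doing this for the two r-windows meeting
   exactly at the position of the value 1, whose union is a k-window, gives
   n(n+1) <= (2q+1) M + 1.  As (2q+1) k = 2n - 1, this forces
   2M >= k(n+1) + 3 once k >= 5 and q >= 1. *)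

Section PeriodicWindows.

Variable F : nat -> nat.

Lemma sum_nat_overlap x a b :
  \sum_(x <= i < x + a.+1) F i + \sum_(x + a <= i < x + a + b) F i =
  \sum_(x <= i < x + a + b) F i + F (x + a).
Proof.
rewrite addnS big_nat_recr ?leq_addr //=.
by rewrite [in RHS](@big_cat_nat _ _ _ (x + a)) ?leq_addr //= addnAC.
Qed.

Lemma sum_nat_blocks_le k M x q :
  (forall y, \sum_(y <= i < y + k) F i <= M) ->
  \sum_(x <= i < x + q * k) F i <= q * M.
Proof.
move=> windowM; elim: q => [|q IH]; first by rewrite big_geq ?addn0.
rewrite !mulSnr addnA (@big_cat_nat _ _ _ (x + q * k)) ?leq_addr //=.
exact: leq_add.
Qed.

Variable n : nat.
Hypothesis F_periodic : forall i, F (i + n) = F i.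

Lemma sum_nat_period x : \sum_(x <= i < x + n) F i = \sum_(i < n) F i.
Proof.
elim: x => [|x IH]; first by rewrite big_mkord.
have dropl : \sum_(x <= i < (x + n).+1) F i = F x + \sum_(x.+1 <= i < (x + n).+1) F i.
  by rewrite big_ltn // ltnS leq_addr.
have dropr : \sum_(x <= i < (x + n).+1) F i = \sum_(x <= i < x + n) F i + F (x + n).
  by rewrite big_nat_recr // leq_addr.
by apply: (@addnI (F x)); rewrite addSn -dropl dropr IH F_periodic addnC.
Qed.

Lemma sum_period_le_windows k r q M x :
  n = r + q * k -> k = r + r.-1 ->
  (forall y, \sum_(y <= i < y + k) F i <= M) ->
  (\sum_(i < n) F i).*2 <= (q.*2).+1 * M + F (x + r.-1).
Proof.
move=> def_n def_k windowM.
have overlap : \sum_(x <= i < x + r) F i + \sum_(x + r.-1 <= i < x + r.-1 + r) F i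
               <= M + F (x + r.-1).
  move: def_n def_k; case: r => [|a] /= _ def_k.
    by rewrite !addn0 !big_geq.
  by rewrite sum_nat_overlap leq_add2r -addnA (addnC a) -def_k.
have period_le y : \sum_(i < n) F i <= \sum_(y <= i < y + r) F i + q * M.
  rewrite -(sum_nat_period y) def_n addnA.
  rewrite (@big_cat_nat _ _ _ (y + r)) ?leq_addr //=.
  by rewrite leq_add2l sum_nat_blocks_le.
by have := leq_add (period_le x) (period_le (x + r.-1)); lia.
Qed.

End PeriodicWindows.

Lemma double_sum_ord_succ n : (\sum_(i < n) i.+1).*2 = n * n.+1.
Proof.
elim: n => [|n IH]; first by rewrite big_ord0.
rewrite big_ord_recr /= doubleD IH; lia.
Qed.

Section PermutationWindows.

Variables (n : nat) (s : {perm 'I_n}).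

Lemma pivalE (i : 'I_n) : pival s i = (s i).+1.
Proof.
by rewrite /pival modn_small // (nth_map i) ?size_enum_ord // nth_ord_enum.
Qed.

Lemma pival_periodic i : pival s (i + n) = pival s i.
Proof. by rewrite /pival modnDr. Qed.

Lemma double_sum_pival : (\sum_(i < n) pival s i).*2 = n * n.+1.
Proof.
rewrite -double_sum_ord_succ [in RHS](reindex_inj (@perm_inj _ s)) /=.
by congr _.*2; apply: eq_bigr => i _; rewrite pivalE.
Qed.

Lemma window_le_maxksum k : 0 < n ->
  forall x, \sum_(x <= i < x + k) pival s i <= maxksum k s.
Proof.
move=> n_gt0 x; apply: leq_trans (leq_bigmax (Ordinal (ltn_pmod x n_gt0))).
rewrite /ksum -{1}[x]add0n big_addn addKn big_mkord /=.
by apply: eq_leq; apply: eq_bigr => j _; rewrite /pival modnDml addnC.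
Qed.

Lemma maxksum_lower_bound k r q : 0 < n -> n = r + q * k -> k = r + r.-1 ->
  n * n.+1 <= (q.*2).+1 * maxksum k s + 1.
Proof.
move=> n_gt0 def_n def_k.
pose p := (s^-1)%g (Ordinal n_gt0).
have := sum_period_le_windows pival_periodic (p + n - r.-1) def_n def_k
  (window_le_maxksum k n_gt0).
have -> : p + n - r.-1 + r.-1 = p + n by lia.
by rewrite double_sum_pival pival_periodic pivalE permKV.
Qed.

End PermutationWindows.

(* If 2M <= k(n+1) + 2, multiplying by 2q + 1 and using (2q + 1) k = 2n - 1
   would give n + 1 <= 4q + 4, whereas n >= 5q + 3. *)
Lemma counting_bound_arith n k q r M :
  n = r + q * k -> k.+1 = r.*2 -> 0 < q -> 5 <= k ->
  n * n.+1 <= (q.*2).+1 * M + 1 -> k * n.+1 + 3 <= M.*2.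
Proof.
move=> def_n def_k q_gt0 k_ge5 le_nM; rewrite leqNgt; apply/negP => lt_M.
have def_2n : (q.*2).+1 * k = n.*2 - 1 by lia.
have le_M : M.*2 <= k * n.+1 + 2 by lia.
have := leq_mul (leqnn (q.*2).+1) le_M.
rewrite mulnDr mulnA def_2n mulnBl mul1n.
have : 5 * q <= k * q by rewrite leq_mul2r k_ge5 orbT.
lia.
Qed.

Lemma one_lt_msum n k :
  (forall s : {perm 'I_n}, k * n.+1 + 3 <= (maxksum k s).*2) -> (1 < msum n k)%R.
Proof.
move=> bound; rewrite /msum; set m := \big[minn/_]_(s : {perm _}) _.
have : k * n.+1 + 3 <= m.*2.
  by apply: (big_ind (fun x => k * n.+1 + 3 <= x.*2)) => // a b; lia.
rewrite -(ler_nat rat) -muln2 !natrD !natrM addn1.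
lra.
Qed.

Theorem theorem1p3 (k n : nat) :
  odd k -> 5 <= k -> k < n -> n = (k.+1 %/ 2) %[mod k] ->
  (1 < msum n k)%R.
Proof.
move=> odd_k k_ge5 lt_kn n_mod_k.
set r := k.+1 %/ 2; set q := n %/ k.
have def_k : k.+1 = r.*2 by rewrite /r divn2 -[LHS]odd_double_half /= odd_k.
have r_lt_k : r < k by lia.
have def_n : n = r + q * k.
  by rewrite {1}(divn_eq n k) n_mod_k -/r (modn_small r_lt_k) addnC.
have q_gt0 : 0 < q by rewrite divn_gt0; lia.
apply: one_lt_msum => s.
apply: (counting_bound_arith def_n def_k q_gt0 k_ge5).
by apply: (maxksum_lower_bound s _ def_n); lia.
Qed.
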